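(* Let $\mathcal{A}$ be a strong $T_0$-family and $\varepsilon>0$. Then $\mathcal{X}_\mathcal{A}$ does not admit any uncountable equilateral set, and the unit sphere of $\mathcal{X}_\mathcal{A}$ does not admit any uncountable $(1+\varepsilon)$-separated set.
   Context: A set $\mathcal{Y}$ is equilateral if there is $\delta>0$ with $\|y-y'\|=\delta$ for distinct $y,y'\in\mathcal{Y}$, and $\gamma$-separated if $\|y-y'\|\ge\gamma$ for distinct $y,y'$. $c_{00}(\omega_1)$ is the set of finitely supported $x\in\mathbb{R}^{\omega_1}$; $\|x\|_\mathcal{A}=\sup_{A\in\mathcal{A}}\sqrt{\sum_{\alpha\in A}x(\alpha)^2}$ and $\mathcal{X}_\mathcal{A}$ is the closure of $c_{00}(\omega_1)$ in $\{x\in\mathbb{R}^{\omega_1}:\|x\|_\mathcal{A}<\infty\}$. For disjoint $A,B$, $A\otimes B=\{\{\alpha,\beta\}:\alpha\in A,\beta\in B\}$. A function $c=(c_0,c_1):[\omega_1]^2\to I\times J$ ($0,1\in I$, $J\ne\emptyset$) is a $T$-coloring if for every uncountable pairwise disjoint family $\{\{a_\xi(0),a_\xi(1)\}:\xi<\omega_1\}$ of pairs and all $(i_0,j_0),(i_1,j_1)\in I\times J$ there are $\xi<\eta$ with $c(\{a_\xi(0),a_\eta(0)\})=(i_0,j_0)$, $c(\{a_\xi(1),a_\eta(1)\})=(i_1,j_1)$; it is a strong $T$-coloring if moreover for every uncountable pairwise disjoint family $\{A_\xi:\xi<\omega_1\}$ of finite subsets of $\omega_1$ there are $\xi<\eta$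 with $c_0[A_\xi\otimes A_\eta]=\{0\}$ and $\xi<\eta$ with $c_0[A_\xi\otimes A_\eta]=\{1\}$. A strong $T_0$-family is $\mathcal{A}_c=\{a\subseteq\omega_1\text{ finite}:c_0[[a]^2]\subseteq\{0\}\}$ for a strong $T$-coloring $c$. *)

From Stdlib Require Import Reals List.
From Coquelicot Require Import Coquelicot.
Open Scope R_scope.

Definition countable {T : Type} (P : T -> Prop) : Prop :=
  exists f : T -> nat, forall x y, P x -> P y -> f x = f y -> x = y.
Definition uncountable {T : Type} (P : T -> Prop) : Prop := ~ countable P.

(** (W, lt) is (an isomorphic copy of) the ordinal omega_1: a strict
    well-order which is uncountable but all of whose proper initial
    segments are countable. *)
Definition is_omega1 (W : Type) (lt : W -> W -> Prop) : Prop :=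
  (forall a, ~ lt a a) /\
  (forall a b c, lt a b -> lt b c -> lt a c) /\
  (forall a b, lt a b \/ a = b \/ lt b a) /\
  well_founded lt /\
  uncountable (fun _ : W => True) /\
  (forall b, countable (fun a => lt a b)).

(** Colorings of [omega_1]^2 are represented by symmetric functions
    c : W -> W -> I * J; only values at distinct arguments are used. *)
Definition symmetric_coloring {W I J : Type} (c : W -> W -> I * J) : Prop :=
  forall a b, c a b = c b a.

Definition T_coloring {W I J : Type} (lt : W -> W -> Prop)
    (c : W -> W -> I * J) : Prop :=
  forall (a0 a1 : W -> W),
    (forall xi, a0 xi <> a1 xi) ->
    (forall xi eta, xi <> eta ->
       forall g, (g = a0 xi \/ g = a1 xi) -> g <> a0 eta /\ g <> a1 eta) ->
    forall (p0 p1 : I * J),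
      exists xi eta, lt xi eta /\ c (a0 xi) (a0 eta) = p0 /\
                     c (a1 xi) (a1 eta) = p1.

Definition strong_T_coloring {W I J : Type} (lt : W -> W -> Prop)
    (zero one : I) (c : W -> W -> I * J) : Prop :=
  T_coloring lt c /\
  forall A : W -> list W,
    (forall xi, A xi <> nil) ->
    (forall xi eta, xi <> eta -> forall g, In g (A xi) -> ~ In g (A eta)) ->
    (exists xi eta, lt xi eta /\
       forall a b, In a (A xi) -> In b (A eta) -> fst (c a b) = zero) /\
    (exists xi eta, lt xi eta /\
       forall a b, In a (A xi) -> In b (A eta) -> fst (c a b) = one).

(** The family A_c of finite 0-homogeneous sets (finite sets = duplicate-free lists). *)
Definition T0_family {W I J : Type} (zero : I) (c : W -> W -> I * J)
    (l : list W) : Prop :=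
  NoDup l /\
  forall a b, In a l -> In b l -> a <> b -> fst (c a b) = zero.

Definition sumsq {W : Type} (x : W -> R) (l : list W) : R :=
  fold_right Rplus 0 (map (fun a => (x a) ^ 2) l).

Definition normA {W : Type} (A : list W -> Prop) (x : W -> R) : Rbar :=
  Lub_Rbar (fun r => exists l, A l /\ r = sqrt (sumsq x l)).

Definition finsupp {W : Type} (x : W -> R) : Prop :=
  exists l : list W, forall a, x a <> 0 -> In a l.

Definition vsub {W : Type} (x y : W -> R) : W -> R := fun a => x a - y a.

(** X_A: closure of c_00 inside { x | ||x||_A < oo }. *)
Definition XA {W : Type} (A : list W -> Prop) (x : W -> R) : Prop :=
  Rbar_lt (normA A x) p_infty /\
  forall eps, 0 < eps ->
    exists z, finsupp z /\ Rbar_lt (normA A (vsub x z)) (Finite eps).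

Definition equilateral {W : Type} (A : list W -> Prop) (Y : (W -> R) -> Prop) : Prop :=
  exists delta, 0 < delta /\
    forall y y', Y y -> Y y' -> y <> y' -> normA A (vsub y y') = Finite delta.

Definition separated {W : Type} (A : list W -> Prop) (gamma : R)
    (Y : (W -> R) -> Prop) : Prop :=
  forall y y', Y y -> Y y' -> y <> y' -> Rbar_le (Finite gamma) (normA A (vsub y y')).

From Stdlib Require Import Reals List Lra Lia ZArith Classical ClassicalEpsilon.
From Stdlib Require Import FunctionalExtensionality PropExtensionality.
From Stdlib Require Cantor.
From Coquelicot Require Import Coquelicot.
Open Scope R_scope.

(* Approximate every member y of an uncountable family by a finitely supported vector; by the
   Delta-system lemma and pigeonholing, pass to an uncountable subfamily whose supports are
   pairwise disjoint off a common finite root on which all approximants nearly agree.  Up to a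
   small error, distances in the family are then distances between vectors u_y with pairwise
   disjoint supports T_y.  If c is 1 on T_y x T_y', no 0-homogeneous set meets both supports, so
   ||u_y - u_y'|| <= max (||u_y||, ||u_y'||); if c is 0 there, the union of 0-homogeneous subsets
   of T_y and T_y' is 0-homogeneous, so ||u_y - u_y'||^2 >= ||u_y||^2 + ||u_y'||^2.  On the unit
   sphere the first case yields a pair at distance about 1.  In an equilateral family with all
   ||u_y|| close to some m, the two cases give delta <~ m and delta^2 >~ 2 m^2, which is absurd. *)

Definition classic_eq_dec {T} (a b : T) : {a = b} + {a <> b} :=
  excluded_middle_informative (a = b).

Definition inb {T} (r : list T) (a : T) : bool :=
  if in_dec classic_eq_dec a r then true else false.

Lemma inb_true {T} (r : list T) a : inb r a = true <-> In a r.
Proof. unfold inb. destruct (in_dec classic_eq_dec a r); split; congruence || tauto. Qed.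

Definition pairwise_disjoint {V W} (P : V -> Prop) (T : V -> list W) : Prop :=
  forall y y', P y -> P y' -> y <> y' -> forall a, In a (T y) -> ~ In a (T y').

Definition pair_in_disjoint_families {W} (Rel : list W -> list W -> Prop) : Prop :=
  forall T : W -> list W, (forall xi, T xi <> nil) -> pairwise_disjoint (fun _ => True) T ->
  exists xi eta, xi <> eta /\ Rel (T xi) (T eta).

Lemma countable_sub {T} (P Q : T -> Prop) :
  (forall x, P x -> Q x) -> countable Q -> countable P.
Proof. intros H [f Hf]. exists f. auto. Qed.

Lemma countable_bigcup {A B} (S : A -> Prop) (Q : A -> B -> Prop) :
  countable S -> (forall s, S s -> countable (Q s)) ->
  countable (fun y => exists s, S s /\ Q s y).
Proof.
  intros [f Hf] HQ.
  destruct (choice (fun s (g : B -> nat) =>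
    S s -> forall x y, Q s x -> Q s y -> g x = g y -> x = y))
    as [G HG].
  { intro s. destruct (classic (S s)) as [Hs|Hs].
    - destruct (HQ s Hs) as [g Hg]. exists g. auto.
    - exists (fun _ => 0%nat). contradiction. }
  exists (fun y => match excluded_middle_informative (exists s, S s /\ Q s y) with
    | left H => let s := proj1_sig (constructive_indefinite_description _ H) in
                Cantor.to_nat (f s, G s y)
    | right _ => 0%nat end).
  intros x y Hx Hy.
  destruct (excluded_middle_informative (exists s, S s /\ Q s x)) as [H1|]; [|contradiction].
  destruct (excluded_middle_informative (exists s, S s /\ Q s y)) as [H2|]; [|contradiction].
  destruct (constructive_indefinite_description _ H1) as [s1 [Hs1 Hq1]].
  destruct (constructive_indefinite_description _ H2) as [s2 [Hs2 Hq2]].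
  intro E. cbv beta zeta in E.
  apply (f_equal Cantor.of_nat) in E. rewrite !Cantor.cancel_of_to in E.
  injection E as E1 E2.
  assert (s1 = s2) by (apply Hf; auto). subst s2.
  exact (HG s1 Hs1 x y Hq1 Hq2 E2).
Qed.

Lemma countable_empty {T} (P : T -> Prop) : (forall x, ~ P x) -> countable P.
Proof. intros H. exists (fun _ => 0%nat). intros a b Ha. exfalso; exact (H a Ha). Qed.

Lemma countable_single {T} (x : T) : countable (fun y => y = x).
Proof. exists (fun _ => 0%nat). intros a b -> -> _. reflexivity. Qed.

Lemma countable_or {T} (P Q : T -> Prop) :
  countable P -> countable Q -> countable (fun x => P x \/ Q x).
Proof.
  intros HP HQ.
  apply (countable_sub _ (fun x => exists b : bool, True /\ (if b then P else Q) x)).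
  - intros x [H|H]; [exists true|exists false]; auto.
  - apply countable_bigcup; [|intros []; auto].
    exists (fun b : bool => if b then 0%nat else 1%nat). intros [] [] _ _; congruence.
Qed.

Lemma countable_In {T} (l : list T) : countable (fun a => In a l).
Proof.
  induction l as [|x l IH]; [apply countable_empty; auto|].
  apply (countable_sub _ (fun a => a = x \/ In a l)); [intros a [->|H]; auto|].
  apply countable_or; [apply countable_single|exact IH].
Qed.

Lemma countable_image {A B} (S : A -> Prop) (g : A -> B) :
  countable S -> countable (fun y => exists a, S a /\ y = g a).
Proof. intros HS. apply countable_bigcup; auto. intros s _. apply countable_single. Qed.

Lemma countable_nat : countable (fun _ : nat => True).
Proof. exists (fun n => n). auto. Qed.

Lemma countable_Z : countable (fun _ : Z => True).
Proof.
  exists (fun z => Z.to_nat (if Z_le_dec 0 z then 2 * z else - 2 * z - 1)%Z).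
  intros x y _ _. destruct (Z_le_dec 0 x); destruct (Z_le_dec 0 y); lia.
Qed.

Lemma uncountable_minus_countable {T} (P C : T -> Prop) :
  uncountable P -> countable C -> exists y, P y /\ ~ C y.
Proof.
  intros HP HC. apply NNPP. intro Hn. apply HP, (countable_sub _ C); auto.
  intros y Hy. apply NNPP. intro HCy. apply Hn. eauto.
Qed.

Lemma uncountable_fiber {T K} (P : T -> Prop) (h : T -> K) :
  countable (fun _ : K => True) -> uncountable P ->
  exists k, uncountable (fun y => P y /\ h y = k).
Proof.
  intros HK HP. apply NNPP. intro Hn. apply HP.
  apply (countable_sub _ (fun y => exists k, True /\ (P y /\ h y = k))).
  - intros y Hy. exists (h y). auto.
  - apply countable_bigcup; auto. intros k _. apply NNPP. intro Hk. apply Hn. eauto.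
Qed.

Lemma uncountable_split {T} (P Q : T -> Prop) : uncountable P ->
  uncountable (fun y => P y /\ Q y) \/ uncountable (fun y => P y /\ ~ Q y).
Proof.
  intros HP. apply NNPP. intro Hn. apply not_or_and in Hn as [H1 H2].
  apply NNPP in H1, H2. apply HP.
  apply (countable_sub _ (fun y => (P y /\ Q y) \/ (P y /\ ~ Q y))); [|apply countable_or; auto].
  intros y Hy. destruct (classic (Q y)); auto.
Qed.

Lemma uncountable_two_distinct {T} (P : T -> Prop) :
  uncountable P -> exists x y, P x /\ P y /\ x <> y.
Proof.
  intros HP. apply NNPP. intro Hn. apply HP. exists (fun _ => 0%nat).
  intros x y Hx Hy _. apply NNPP. intro Hxy. apply Hn. eauto.
Qed.

Lemma Int_part_eq_close a b : Int_part a = Int_part b -> Rabs (a - b) < 1.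
Proof.
  intros E. destruct (base_Int_part a) as [Ha1 Ha2]. destruct (base_Int_part b) as [Hb1 Hb2].
  rewrite E in Ha1, Ha2. apply Rabs_def1; lra.
Qed.

Lemma uncountable_near_constant {V} (P : V -> Prop) (f : V -> R) t : 0 < t -> uncountable P ->
  exists P', (forall y, P' y -> P y) /\ uncountable P' /\
    forall y y', P' y -> P' y' -> Rabs (f y - f y') < t.
Proof.
  intros Ht HP.
  destruct (uncountable_fiber P (fun y => Int_part (f y / t)) countable_Z HP) as [k Hk].
  exists (fun y => P y /\ Int_part (f y / t) = k). split; [tauto|split; [exact Hk|]].
  intros y y' [_ Ey] [_ Ey'].
  pose proof (Int_part_eq_close (f y / t) (f y' / t) (eq_trans Ey (eq_sym Ey'))) as H.
  replace (f y - f y') with (t * (f y / t - f y' / t)) by (field; lra).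
  rewrite Rabs_mult, (Rabs_pos_eq t) by lra.
  apply Rlt_le_trans with (t * 1); [apply Rmult_lt_compat_l|]; lra.
Qed.

Lemma uncountable_near_constant_on {V W} (f : V -> W -> R) (r : list W) t : 0 < t ->
  forall P, uncountable P ->
  exists P', (forall y, P' y -> P y) /\ uncountable P' /\
    forall y y' a, P' y -> P' y' -> In a r -> Rabs (f y a - f y' a) < t.
Proof.
  intros Ht. induction r as [|b r IH]; intros P HP.
  - exists P. split; [auto|split; [auto|]]. intros ? ? ? _ _ [].
  - destruct (IH P HP) as (P1 & HP1P & HP1 & Hr).
    destruct (uncountable_near_constant P1 (fun y => f y b) t Ht HP1) as (P2 & HP2P1 & HP2 & Hb).
    exists P2. split; [auto|split; [auto|]].
    intros y y' a Hy Hy' [<-|Ha]; auto.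
Qed.

Section Omega1.
Variables (W : Type) (lt : W -> W -> Prop).
Hypothesis Hw1 : is_omega1 W lt.

Lemma omega1_sequence {T} (P : T -> Prop) (Comp : T -> T -> Prop) :
  (forall x y, Comp x y -> Comp y x) ->
  (forall C : T -> Prop, countable C -> exists y, P y /\ forall x, C x -> Comp x y) ->
  exists g : W -> T, (forall xi, P (g xi)) /\ forall xi eta, xi <> eta -> Comp (g xi) (g eta).
Proof.
  intros Hsym Hext.
  destruct Hw1 as (_ & _ & Htri & Hwf & _ & Hseg).
  assert (inhT : inhabited T).
  { destruct (Hext (fun _ => False)) as [y _]; [apply countable_empty; auto|exact (inhabits y)]. }
  set (F := fun xi (rec : forall z, lt z xi -> T) =>
        epsilon inhT (fun y => P y /\ forall z (h : lt z xi), Comp (rec z h) y)).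
  set (g := Fix Hwf (fun _ => T) F).
  assert (Hg : forall xi, g xi = F xi (fun z _ => g z)).
  { intro xi. apply (Fix_eq Hwf (fun _ => T) F). intros x f f' Hff. unfold F. f_equal.
    apply functional_extensionality. intro y. apply propositional_extensionality.
    split; intros [Hy Hc]; split; auto; intros z h; [rewrite <- Hff|rewrite Hff]; auto. }
  assert (Hspec : forall xi, P (g xi) /\ forall z, lt z xi -> Comp (g z) (g xi)).
  { intro xi. rewrite Hg.
    apply (epsilon_spec inhT (fun y => P y /\ forall z, lt z xi -> Comp (g z) y)).
    destruct (Hext (fun x => exists z, lt z xi /\ x = g z)) as [y [Hy Hcy]].
    - apply countable_image, Hseg.
    - exists y. split; auto. intros z h. apply Hcy. eauto. }
  exists g. split; [apply Hspec|].
  intros xi eta Hne. destruct (Htri xi eta) as [h|[h|h]]; [apply Hspec, h|contradiction|].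
  apply Hsym, Hspec, h.
Qed.

Lemma omega1_injection {T} (P : T -> Prop) : uncountable P ->
  exists g : W -> T, (forall xi, P (g xi)) /\ forall xi eta, g xi = g eta -> xi = eta.
Proof.
  intros HP. destruct (omega1_sequence P (fun x y => x <> y)) as [g [HgP Hg]].
  - congruence.
  - intros C HC. destruct (uncountable_minus_countable P C HP HC) as [y [Hy Hny]].
    exists y. split; auto. intros x Hx ->. contradiction.
  - exists g. split; auto. intros xi eta E. apply NNPP. intro Hne. exact (Hg xi eta Hne E).
Qed.

Lemma uncountable_range {T} (g : W -> T) : (forall xi eta, g xi = g eta -> xi = eta) ->
  uncountable (fun y => exists xi, y = g xi).
Proof.
  intros Hinj [f Hf]. destruct Hw1 as (_ & _ & _ & _ & Hunc & _). apply Hunc.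
  exists (fun xi => f (g xi)). intros x y _ _ E. apply Hinj, Hf; eauto.
Qed.

Lemma delta_system_disjoint {V} (F : V -> list W) (P : V -> Prop) : uncountable P ->
  (forall a, countable (fun y => P y /\ In a (F y))) ->
  exists P', (forall y, P' y -> P y) /\ uncountable P' /\ pairwise_disjoint P' F.
Proof.
  intros HP Hfib.
  destruct (omega1_sequence P (fun x y => x <> y /\ forall a, In a (F x) -> ~ In a (F y)))
    as [g [HgP Hg]].
  - intros x y [Hxy Hd]. split; [congruence|]. intros a Hay Hax. exact (Hd a Hax Hay).
  - intros C HC.
    set (Bad := fun y => exists x, C x /\
                  (y = x \/ exists a, In a (F x) /\ (P y /\ In a (F y)))).
    assert (HBad : countable Bad).
    { apply countable_bigcup; auto. intros x _. apply countable_or; [apply countable_single|].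
      apply countable_bigcup; [apply countable_In|auto]. }
    destruct (uncountable_minus_countable P Bad HP HBad) as [y [Hy Hny]].
    exists y. split; auto. intros x Hx. split.
    + intros ->. apply Hny. exists y. auto.
    + intros a Hax Hay. apply Hny. exists x. split; auto. right. eauto.
  - exists (fun y => exists xi, y = g xi). split; [|split].
    + intros y [xi ->]. auto.
    + apply uncountable_range. intros xi eta E. apply NNPP. intro Hne.
      exact (proj1 (Hg xi eta Hne) E).
    + intros y y' [xi ->] [eta ->] Hne. apply Hg. congruence.
Qed.

Lemma delta_system_bounded {V} (n : nat) : forall (F : V -> list W) (P : V -> Prop),
  uncountable P -> (forall y, P y -> (length (F y) <= n)%nat) ->
  exists P' r, (forall y, P' y -> P y) /\ uncountable P' /\
    forall y y', P' y -> P' y' -> y <> y' -> forall a, In a (F y) -> In a (F y') -> In a r.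
Proof.
  induction n as [|n IH]; intros F P HP Hlen.
  - exists P, nil. split; [auto|split; [auto|]].
    intros y y' Hy _ _ a Ha. specialize (Hlen y Hy).
    destruct (F y); [destruct Ha|simpl in Hlen; lia].
  - destruct (classic (exists a, uncountable (fun y => P y /\ In a (F y)))) as [[a Ha]|Hn].
    + destruct (IH (fun y => remove classic_eq_dec a (F y)) _ Ha) as (P' & r & HP'P & HP' & Hr).
      { intros y [Hy Hay]. pose proof (remove_length_lt classic_eq_dec (F y) a Hay).
        specialize (Hlen y Hy). lia. }
      exists P', (a :: r). split; [intros y Hy; apply HP'P; auto|split; [auto|]].
      intros y y' Hy Hy' Hne b Hb Hb'. destruct (classic_eq_dec a b) as [->|Hab]; [left; auto|].
      right. apply (Hr y y'); auto; apply in_in_remove; auto.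
    + destruct (delta_system_disjoint F P HP) as (P' & HP'P & HP' & Hdis).
      { intro a. apply NNPP. intro Hc. apply Hn. eauto. }
      exists P', nil. split; [auto|split; [auto|]].
      intros y y' Hy Hy' Hne a Ha Ha'. exact (Hdis y y' Hy Hy' Hne a Ha Ha').
Qed.

Lemma delta_system {V} (F : V -> list W) (P : V -> Prop) : uncountable P ->
  exists P' r, (forall y, P' y -> P y) /\ uncountable P' /\
    forall y y', P' y -> P' y' -> y <> y' -> forall a, In a (F y) -> In a (F y') -> In a r.
Proof.
  intros HP. destruct (uncountable_fiber P (fun y => length (F y)) countable_nat HP) as [n Hn].
  destruct (delta_system_bounded n F _ Hn) as (P' & r & HP'P & HP' & Hr); [intros y [_ ->]; auto|].
  exists P', r. split; [intros y Hy; apply HP'P; auto|auto].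
Qed.

Lemma uncountable_has_pair (Rel : list W -> list W -> Prop) {V} (P : V -> Prop) (T : V -> list W) :
  Rel nil nil -> pair_in_disjoint_families Rel -> uncountable P -> pairwise_disjoint P T ->
  exists y y', P y /\ P y' /\ y <> y' /\ Rel (T y) (T y').
Proof.
  intros Hnil HRel HP HT.
  destruct (uncountable_split P (fun y => T y = nil) HP) as [Hn|Hn].
  - destruct (uncountable_two_distinct _ Hn) as (y & y' & [Hy Ey] & [Hy' Ey'] & Hyy).
    exists y, y'. rewrite Ey, Ey'. auto.
  - destruct (omega1_injection _ Hn) as [g [Hg Hinj]].
    destruct (HRel (fun xi => T (g xi))) as (xi & eta & Hne & HR).
    + intro xi. apply (Hg xi).
    + intros xi eta _ _ Hne. apply HT; try apply Hg. intro E. apply Hne, Hinj, E.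
    + exists (g xi), (g eta). repeat split; try apply Hg; auto.
Qed.

End Omega1.

Section SumOfSquares.
Context {W : Type}.
Implicit Types (x y z : W -> R) (l r : list W).

Definition norm2 x l : R := sqrt (sumsq x l).

Definition supported_in x r : Prop := forall a, x a <> 0 -> In a r.

Definition zero_on r x : W -> R := fun a => if inb r a then 0 else x a.

Lemma sumsq_cons x a l : sumsq x (a :: l) = x a ^ 2 + sumsq x l.
Proof. reflexivity. Qed.

Lemma sumsq_ge0 x l : 0 <= sumsq x l.
Proof.
  induction l as [|a l IH]; [apply Rle_refl|].
  rewrite sumsq_cons. pose proof (pow2_ge_0 (x a)). lra.
Qed.

Lemma sumsq_app x l1 l2 : sumsq x (l1 ++ l2) = sumsq x l1 + sumsq x l2.
Proof.
  induction l1 as [|a l1 IH]; [cbn [app]; unfold sumsq at 2; cbn; ring|].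
  cbn [app]. rewrite !sumsq_cons, IH. ring.
Qed.

Lemma sumsq_ext_sq x y l : (forall a, In a l -> x a ^ 2 = y a ^ 2) -> sumsq x l = sumsq y l.
Proof.
  induction l as [|a l IH]; intros H; [reflexivity|].
  rewrite !sumsq_cons, H, IH; [reflexivity| |left]; auto. intros b Hb. apply H. right. exact Hb.
Qed.

Lemma sumsq_filter x (p : W -> bool) l :
  (forall a, In a l -> x a <> 0 -> p a = true) -> sumsq x (filter p l) = sumsq x l.
Proof.
  induction l as [|a l IH]; intros H; [reflexivity|].
  assert (IH' : sumsq x (filter p l) = sumsq x l) by (apply IH; intros; apply H; simpl; auto).
  cbn [filter]. destruct (p a) eqn:E.
  - rewrite !sumsq_cons, IH'. reflexivity.
  - rewrite sumsq_cons, IH'. destruct (Req_dec (x a) 0) as [E0|E0].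
    + rewrite E0. ring.
    + rewrite H in E by (simpl; auto). discriminate.
Qed.

Lemma sumsq_term x l a : In a l -> x a ^ 2 <= sumsq x l.
Proof.
  induction l as [|b l IH]; intros Ha; [destruct Ha|].
  rewrite sumsq_cons. destruct Ha as [->|H].
  - pose proof (sumsq_ge0 x l). lra.
  - pose proof (pow2_ge_0 (x b)). specialize (IH H). lra.
Qed.

Lemma sumsq_le_length x l M : (forall a, In a l -> x a ^ 2 <= M) ->
  sumsq x l <= INR (length l) * M.
Proof.
  induction l as [|a l IH]; intros H; [unfold sumsq; simpl; lra|].
  rewrite sumsq_cons. cbn [length]. rewrite S_INR.
  assert (x a ^ 2 <= M) by (apply H; left; auto).
  assert (sumsq x l <= INR (length l) * M) by (apply IH; intros; apply H; right; auto). lra.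
Qed.

Lemma sumsq_le_support x l r M : NoDup l -> supported_in x r -> 0 <= M ->
  (forall a, x a ^ 2 <= M) -> sumsq x l <= INR (length r) * M.
Proof.
  intros Hnd Hs HM Hb.
  rewrite <- (sumsq_filter x (inb r) l) by (intros a _ Ha; apply inb_true; auto).
  apply Rle_trans with (INR (length (filter (inb r) l)) * M); [apply sumsq_le_length; auto|].
  apply Rmult_le_compat_r; auto. apply le_INR, NoDup_incl_length; [apply NoDup_filter; auto|].
  intros a Ha. apply filter_In in Ha as [_ Ha]. apply inb_true. exact Ha.
Qed.

Lemma norm2_ge0 x l : 0 <= norm2 x l.
Proof. apply sqrt_pos. Qed.

Lemma norm2_cons x a l : norm2 x (a :: l) = Cmod (x a, norm2 x l).
Proof.
  unfold Cmod, norm2. cbn [fst snd]. rewrite pow2_sqrt, sumsq_cons by apply sumsq_ge0. reflexivity.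
Qed.

Lemma norm2_ext_sq x y l : (forall a, In a l -> x a ^ 2 = y a ^ 2) -> norm2 x l = norm2 y l.
Proof. intros H. unfold norm2. f_equal. apply sumsq_ext_sq, H. Qed.

(* Minkowski's inequality, by induction: [norm2 x (a :: l)] is the modulus of the complex number
   [(x a, norm2 x l)], so each step is the triangle inequality in the plane. *)
Lemma norm2_add_le x y z l : (forall a, z a = x a + y a) -> norm2 z l <= norm2 x l + norm2 y l.
Proof.
  intros Hz. induction l as [|a l IH]; [unfold norm2, sumsq; simpl; rewrite sqrt_0; lra|].
  rewrite !norm2_cons.
  apply Rle_trans with (Cmod ((x a, norm2 x l) + (y a, norm2 y l))%C); [|apply Cmod_triangle].
  unfold Cmod. apply sqrt_le_1_alt. cbn [fst snd Cplus]. rewrite Hz.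
  apply Rplus_le_compat_l, pow_incr. split; [apply norm2_ge0|exact IH].
Qed.

Lemma norm2_vsub_sym x y l : norm2 (vsub x y) l = norm2 (vsub y x) l.
Proof. apply norm2_ext_sq. intros. unfold vsub. ring. Qed.

Lemma norm2_vsub_le x y l : norm2 (vsub x y) l <= norm2 x l + norm2 y l.
Proof.
  rewrite <- (norm2_ext_sq (fun a => - y a) y l) by (intros; ring).
  apply norm2_add_le. intro a. reflexivity.
Qed.

Lemma norm2_reverse_triangle x y l : Rabs (norm2 x l - norm2 y l) <= norm2 (vsub x y) l.
Proof.
  assert (Hx : norm2 x l <= norm2 y l + norm2 (vsub x y) l)
    by (apply norm2_add_le; intro; unfold vsub; ring).
  assert (Hy : norm2 y l <= norm2 x l + norm2 (vsub x y) l)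
    by (rewrite norm2_vsub_sym; apply norm2_add_le; intro; unfold vsub; ring).
  apply Rabs_le. lra.
Qed.

End SumOfSquares.

Section NormA.
Context {W : Type} (A : list W -> Prop).
Implicit Types (x y z : W -> R) (l r : list W).

Lemma normA_le x (M : R) : (forall l, A l -> norm2 x l <= M) -> Rbar_le (normA A x) M.
Proof. intros H. apply Lub_Rbar_correct. intros ? [l [Hl ->]]. apply H, Hl. Qed.

Lemma norm2_le_normA x l : A l -> Rbar_le (norm2 x l) (normA A x).
Proof. intros Hl. apply Lub_Rbar_correct. exists l. auto. Qed.

Lemma norm2_le_Finite_normA x m l : normA A x = Finite m -> A l -> norm2 x l <= m.
Proof. intros E Hl. pose proof (norm2_le_normA x l Hl) as H. rewrite E in H. exact H. Qed.

Lemma norm2_lt_of_normA_lt x (m : R) l : Rbar_lt (normA A x) m -> A l -> norm2 x l < m.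
Proof.
  intros E Hl. pose proof (norm2_le_normA x l Hl) as H.
  destruct (normA A x); simpl in *; [lra|contradiction|contradiction].
Qed.

Lemma normA_approx x m t : normA A x = Finite m -> 0 < t -> exists l, A l /\ m - t < norm2 x l.
Proof.
  intros E Ht. apply NNPP. intro Hn.
  assert (H : Rbar_le (normA A x) (m - t)).
  { apply normA_le. intros l Hl. apply Rnot_lt_le. intro h. apply Hn. eauto. }
  rewrite E in H. simpl in H. lra.
Qed.

Lemma normA_finsupp_finite x L : A nil -> (forall l, A l -> NoDup l) -> supported_in x L ->
  is_finite (normA A x).
Proof.
  intros Hnil Hnd HL.
  assert (Hub : Rbar_le (normA A x) (sqrt (INR (length L) * sumsq x L))).
  { apply normA_le. intros l Hl. apply sqrt_le_1_alt, sumsq_le_support; auto; [apply sumsq_ge0|].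
    intro a. destruct (Req_dec (x a) 0) as [->|Ha]; [rewrite pow_i by lia; apply sumsq_ge0|].
    apply sumsq_term, HL, Ha. }
  pose proof (norm2_le_normA x nil Hnil) as Hlb.
  destruct (normA A x); [reflexivity|contradiction|contradiction].
Qed.

Lemma finsupp_approximation (Y : (W -> R) -> Prop) e : 0 < e -> (forall y, Y y -> XA A y) ->
  exists (z : (W -> R) -> W -> R) (L : (W -> R) -> list W), forall y, Y y ->
    supported_in (z y) (L y) /\ forall l, A l -> norm2 (vsub y (z y)) l < e.
Proof.
  intros He HX.
  destruct (choice (fun y (p : (W -> R) * list W) => Y y ->
    supported_in (fst p) (snd p) /\ forall l, A l -> norm2 (vsub y (fst p)) l < e)) as [f Hf].
  - intro y. destruct (classic (Y y)) as [Hy|Hy]; [|exists (fun _ => 0, nil); contradiction].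
    destruct (proj2 (HX y Hy) e He) as (z & [L HL] & Hz).
    exists (z, L). intros _. split; [exact HL|]. intros l Hl. eapply norm2_lt_of_normA_lt; eauto.
  - exists (fun y => fst (f y)), (fun y => snd (f y)). exact Hf.
Qed.

Definition incompatible (T1 T2 : list W) : Prop :=
  forall l a b, A l -> In a l -> In b l -> In a T1 -> In b T2 -> False.

Definition compatible (T1 T2 : list W) : Prop :=
  forall l1 l2, A l1 -> A l2 -> incl l1 T1 -> incl l2 T2 -> A (l1 ++ l2).

Lemma incompatible_nil : incompatible nil nil.
Proof. intros l a b _ _ _ []. Qed.

Lemma compatible_nil : compatible nil nil.
Proof. intros l1 l2 Hl1 _ _ H2. rewrite (incl_l_nil H2), app_nil_r. exact Hl1. Qed.

Lemma norm2_vsub_incompatible u1 u2 T1 T2 l :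
  incompatible T1 T2 -> supported_in u1 T1 -> supported_in u2 T2 -> A l ->
  norm2 (vsub u1 u2) l <= Rmax (norm2 u1 l) (norm2 u2 l).
Proof.
  intros Hinc H1 H2 Hl.
  destruct (classic (exists b, In b l /\ In b T2)) as [[b [Hb HbT]]|Hn].
  - apply Rle_trans with (norm2 u2 l); [|apply Rmax_r].
    right. apply norm2_ext_sq. intros a Ha. unfold vsub.
    replace (u1 a) with 0; [ring|].
    apply NNPP. intro Hu. exact (Hinc l a b Hl Ha Hb (H1 a (not_eq_sym Hu)) HbT).
  - apply Rle_trans with (norm2 u1 l); [|apply Rmax_l].
    right. apply norm2_ext_sq. intros a Ha. unfold vsub.
    replace (u2 a) with 0; [ring|].
    apply NNPP. intro Hu. apply Hn. exists a. split; [exact Ha|apply H2; auto].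
Qed.

Hypothesis HA_filter : forall p l, A l -> A (filter p l).

Lemma sumsq_vsub_compatible u1 u2 T1 T2 l1 l2 :
  compatible T1 T2 -> (forall a, In a T1 -> ~ In a T2) ->
  supported_in u1 T1 -> supported_in u2 T2 -> A l1 -> A l2 ->
  exists l, A l /\ sumsq (vsub u1 u2) l = sumsq u1 l1 + sumsq u2 l2.
Proof.
  intros Hcomp Hdis H1 H2 Hl1 Hl2.
  exists (filter (inb T1) l1 ++ filter (inb T2) l2). split.
  { apply Hcomp; try apply HA_filter; auto;
      intros a Ha; apply filter_In in Ha as [_ Ha]; apply inb_true, Ha. }
  rewrite sumsq_app, <- (sumsq_filter u1 (inb T1) l1), <- (sumsq_filter u2 (inb T2) l2)
    by (intros a _ Ha; apply inb_true; auto).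
  f_equal; apply sumsq_ext_sq; intros a Ha; apply filter_In in Ha as [_ Ha];
    apply inb_true in Ha; unfold vsub.
  - replace (u2 a) with 0; [ring|]. apply NNPP. intro Hu. exact (Hdis a Ha (H2 a (not_eq_sym Hu))).
  - replace (u1 a) with 0; [ring|]. apply NNPP. intro Hu. exact (Hdis a (H1 a (not_eq_sym Hu)) Ha).
Qed.

Lemma norm2_zero_on_le x z r e l : A l -> (forall l, A l -> norm2 (vsub x z) l < e) ->
  exists l', A l' /\ norm2 (zero_on r z) l <= norm2 x l' + e.
Proof.
  intros Hl Hz. set (l' := filter (fun a => negb (inb r a)) l).
  exists l'. split; [apply HA_filter, Hl|].
  assert (E : norm2 (zero_on r z) l = norm2 z l').
  { unfold norm2, l'. rewrite <- (sumsq_filter (zero_on r z) (fun a => negb (inb r a)) l).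
    - f_equal. apply sumsq_ext_sq. intros a Ha. apply filter_In in Ha as [_ Ha].
      unfold zero_on. destruct (inb r a); [discriminate|reflexivity].
    - intros a _ Ha. unfold zero_on in Ha. destruct (inb r a); [contradiction|reflexivity]. }
  rewrite E. pose proof (norm2_reverse_triangle z x l') as H.
  rewrite norm2_vsub_sym in H. apply Rabs_le_between' in H. specialize (Hz l' (HA_filter _ _ Hl)).
  lra.
Qed.

End NormA.

Lemma norm2_zero_on_dist {W} (x x' z z' : W -> R) r D e l :
  NoDup l -> norm2 (vsub x z) l < e -> norm2 (vsub x' z') l < e ->
  (forall a, In a r -> Rabs (z a - z' a) < D) -> INR (length r) * D ^ 2 <= e ^ 2 ->
  Rabs (norm2 (vsub x x') l - norm2 (vsub (zero_on r z) (zero_on r z')) l) <= 3 * e.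
Proof.
  intros Hnd Hz Hz' Hr HD.
  set (rho := fun a => if inb r a then z a - z' a else 0).
  assert (He : 0 <= e) by (pose proof (norm2_ge0 (vsub x z) l); lra).
  assert (Hrho : norm2 rho l <= e).
  { unfold norm2. rewrite <- (sqrt_pow2 e He). apply sqrt_le_1_alt.
    eapply Rle_trans; [apply (sumsq_le_support rho l r (D ^ 2))|exact HD]; auto.
    - intros a Ha. apply inb_true. unfold rho in Ha.
      destruct (inb r a); [reflexivity|contradiction].
    - apply pow2_ge_0.
    - intro a. unfold rho. destruct (inb r a) eqn:Ea.
      + rewrite <- pow2_abs. apply pow_incr. split; [apply Rabs_pos|].
        apply Rlt_le, Hr, inb_true, Ea.
      + rewrite pow_i by lia. apply pow2_ge_0. }
  eapply Rle_trans; [apply norm2_reverse_triangle|].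
  eapply Rle_trans; [apply (norm2_add_le (vsub (vsub x z) (vsub x' z')) rho)|].
  { intro a. unfold vsub, zero_on, rho. destruct (inb r a); ring. }
  pose proof (norm2_vsub_le (vsub x z) (vsub x' z') l). lra.
Qed.

Section Reduction.
Context {W : Type} (lt : W -> W -> Prop) (A : list W -> Prop).
Hypothesis Hw1 : is_omega1 W lt.
Hypothesis HA_nodup : forall l, A l -> NoDup l.
Hypothesis HA_filter : forall p l, A l -> A (filter p l).

(* [u y] stands for a finitely supported approximation of [y] whose coordinates in the root of
   the Delta-system have been erased. *)
Record reduced_family (e : R) (Y P : (W -> R) -> Prop) (u : (W -> R) -> W -> R)
    (T : (W -> R) -> list W) : Prop := {
  reduced_sub : forall y, P y -> Y y;
  reduced_uncountable : uncountable P;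
  reduced_support : forall y, P y -> supported_in (u y) (T y);
  reduced_disjoint : pairwise_disjoint P T;
  reduced_dist : forall y y' l, P y -> P y' -> A l ->
    Rabs (norm2 (vsub y y') l - norm2 (vsub (u y) (u y')) l) <= 3 * e;
  reduced_norm : forall y l, P y -> A l -> exists l', A l' /\ norm2 (u y) l <= norm2 y l' + e }.

Lemma reduced_family_sub e Y P P' u T : reduced_family e Y P u T ->
  (forall y, P' y -> P y) -> uncountable P' -> reduced_family e Y P' u T.
Proof.
  intros [Hsub _ Hsupp Hdis Hdist Hnorm] HP'P HP'.
  split; auto. intros y y' Hy Hy'. apply Hdis; auto.
Qed.

Lemma delta_system_reduction Y e : 0 < e -> uncountable Y -> (forall y, Y y -> XA A y) ->
  exists P u T, reduced_family e Y P u T.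
Proof.
  intros He HY HX.
  destruct (finsupp_approximation A Y e He HX) as (z & L & HzL).
  destruct (delta_system W lt Hw1 L Y HY) as (P2 & r & HP2Y & HP2 & Hroot).
  set (n := INR (length r)).
  set (D := e / (n + 1)).
  assert (Hn : 0 <= n) by apply pos_INR.
  assert (HD : 0 < D) by (apply Rdiv_lt_0_compat; lra).
  assert (HnD : n * D ^ 2 <= e ^ 2).
  { assert (E : e = D * (n + 1)) by (unfold D; field; lra). rewrite E.
    assert (0 <= D ^ 2 * (n * n + n + 1)) by (apply Rmult_le_pos; [apply pow2_ge_0|nra]). nra. }
  destruct (uncountable_near_constant_on z r D HD P2 HP2) as (P & HPP2 & HP & Hnear).
  exists P, (fun y => zero_on r (z y)), (fun y => filter (fun a => negb (inb r a)) (L y)).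
  split; auto.
  - intros y Hy a Ha. apply filter_In. unfold zero_on in Ha.
    destruct (inb r a); [contradiction|]. split; [apply HzL; auto|reflexivity].
  - intros y y' Hy Hy' Hne a Ha Ha'.
    apply filter_In in Ha as [Ha Hna]. apply filter_In in Ha' as [Ha' _].
    assert (Hr : inb r a = true) by (apply inb_true, (Hroot y y'); auto).
    rewrite Hr in Hna. discriminate.
  - intros y y' l Hy Hy' Hl. apply norm2_zero_on_dist with D; auto; apply HzL; auto.
  - intros y l Hy Hl. apply norm2_zero_on_le; auto. apply HzL; auto.
Qed.

End Reduction.

Arguments reduced_sub {W A e Y P u T}.
Arguments reduced_uncountable {W A e Y P u T}.
Arguments reduced_dist {W A e Y P u T}.
Arguments reduced_norm {W A e Y P u T}.

Section Consequences.
Context {W : Type} (lt : W -> W -> Prop) (A : list W -> Prop).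
Hypothesis Hw1 : is_omega1 W lt.
Hypothesis HA_nil : A nil.
Hypothesis HA_nodup : forall l, A l -> NoDup l.
Hypothesis HA_filter : forall p l, A l -> A (filter p l).
Hypothesis Hincompatible : pair_in_disjoint_families (incompatible A).

Lemma reduced_incompatible_pair e Y P u T : reduced_family A e Y P u T ->
  exists y y', P y /\ P y' /\ y <> y' /\ forall l, A l ->
    norm2 (vsub y y') l <= 3 * e + Rmax (norm2 (u y) l) (norm2 (u y') l).
Proof.
  intros Hred.
  destruct (uncountable_has_pair W lt Hw1 (incompatible A) P T) as (y & y' & Hy & Hy' & Hne & Hinc);
    try apply Hred; auto using incompatible_nil.
  exists y, y'. repeat split; auto. intros l Hl.
  pose proof (reduced_dist Hred y y' l Hy Hy' Hl) as Hd.
  apply Rabs_le_between' in Hd.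
  pose proof (norm2_vsub_incompatible A (u y) (u y') (T y) (T y') l Hinc) as Hmax.
  assert (norm2 (vsub (u y) (u y')) l <= Rmax (norm2 (u y) l) (norm2 (u y') l))
    by (apply Hmax; auto; apply Hred; auto).
  lra.
Qed.

Lemma no_uncountable_separated_sphere eps : 0 < eps ->
  ~ exists Y, uncountable Y /\ (forall y, Y y -> XA A y /\ normA A y = Finite 1) /\
              separated A (1 + eps) Y.
Proof.
  intros Heps (Y & HY & HX & Hsep).
  set (e := eps / 5).
  destruct (delta_system_reduction lt A Hw1 HA_nodup HA_filter Y e) as (P & u & T & Hred);
    [unfold e; lra|auto|apply HX|].
  destruct (reduced_incompatible_pair e Y P u T Hred) as (y & y' & Hy & Hy' & Hne & Hdist).
  assert (Hu : forall v l, P v -> A l -> norm2 (u v) l <= 1 + e).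
  { intros v l Hv Hl. destruct (reduced_norm Hred v l Hv Hl) as (l' & Hl' & Hle).
    pose proof (norm2_le_Finite_normA A v 1 l' (proj2 (HX v (reduced_sub Hred v Hv))) Hl').
    lra. }
  assert (Hle : Rbar_le (normA A (vsub y y')) (1 + 4 * e)).
  { apply normA_le. intros l Hl. specialize (Hdist l Hl).
    assert (Rmax (norm2 (u y) l) (norm2 (u y') l) <= 1 + e) by (apply Rmax_lub; auto).
    lra. }
  pose proof (Rbar_le_trans _ _ _ (Hsep y y' (reduced_sub Hred y Hy)
                                   (reduced_sub Hred y' Hy') Hne) Hle) as H.
  simpl in H. unfold e in H. lra.
Qed.

Hypothesis Hcompatible : pair_in_disjoint_families (compatible A).

Lemma reduced_compatible_pair e Y P u T : reduced_family A e Y P u T ->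
  exists y y', P y /\ P y' /\ y <> y' /\ forall l3 l4, A l3 -> A l4 ->
    exists l, A l /\ norm2 (u y) l3 ^ 2 + norm2 (u y') l4 ^ 2 <= (norm2 (vsub y y') l + 3 * e) ^ 2.
Proof.
  intros Hred.
  destruct (uncountable_has_pair W lt Hw1 (compatible A) P T) as (y & y' & Hy & Hy' & Hne & Hcomp);
    try apply Hred; auto using compatible_nil.
  exists y, y'. repeat split; auto. intros l3 l4 Hl3 Hl4.
  destruct (sumsq_vsub_compatible A HA_filter (u y) (u y') (T y) (T y') l3 l4) as (l & Hl & E);
    auto; try apply Hred; auto.
  exists l. split; auto.
  unfold norm2 at 1 2. rewrite !pow2_sqrt by apply sumsq_ge0. rewrite <- E.
  rewrite <- (pow2_sqrt (sumsq (vsub (u y) (u y')) l)) by apply sumsq_ge0.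
  pose proof (reduced_dist Hred y y' l Hy Hy' Hl) as Hd.
  apply Rabs_le_between' in Hd.
  apply pow_incr. split; [apply sqrt_pos|]. unfold norm2 in *. lra.
Qed.

Lemma no_uncountable_equilateral :
  ~ exists Y, uncountable Y /\ (forall y, Y y -> XA A y) /\ equilateral A Y.
Proof.
  intros (Y & HY & HX & d & Hd & Heq).
  set (e := d / 100).
  assert (He : 0 < e) by (unfold e; lra).
  destruct (delta_system_reduction lt A Hw1 HA_nodup HA_filter Y e) as (P0 & u & T & Hred0); auto.
  set (m := fun y => real (normA A (u y))).
  assert (Hm : forall y, P0 y -> normA A (u y) = Finite (m y)).
  { intros y Hy. symmetry. eapply normA_finsupp_finite; eauto. apply Hred0, Hy. }
  destruct (uncountable_near_constant P0 m e He (reduced_uncountable Hred0))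
    as (P & HPP0 & HP & Hnear).
  pose proof (reduced_family_sub A e Y P0 P u T Hred0 HPP0 HP) as Hred.
  assert (HdP : forall y y' l, P y -> P y' -> y <> y' -> A l -> norm2 (vsub y y') l <= d).
  { intros y y' l Hy Hy' Hne Hl. apply (norm2_le_Finite_normA A _ _ l); auto.
    apply Heq; auto; apply Hred; auto. }
  assert (Hlow : forall y, P y -> d - 5 * e <= m y).
  { destruct (reduced_incompatible_pair e Y P u T Hred) as (y1 & y1' & Hy1 & Hy1' & Hne & Hdist).
    assert (Hle : Rbar_le (normA A (vsub y1 y1')) (4 * e + m y1)).
    { apply normA_le. intros l Hl. specialize (Hdist l Hl).
      assert (Rmax (norm2 (u y1) l) (norm2 (u y1') l) <= m y1 + e); [|lra].
      pose proof (Hnear y1' y1 Hy1' Hy1) as Hn. apply Rabs_def2 in Hn.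
      apply Rmax_lub; eapply Rle_trans; try (apply (norm2_le_Finite_normA A); eauto); lra. }
    rewrite Heq in Hle by (auto; apply Hred; auto). simpl in Hle.
    intros y Hy. pose proof (Hnear y1 y Hy1 Hy) as Hn. apply Rabs_def2 in Hn. lra. }
  destruct (reduced_compatible_pair e Y P u T Hred) as (y0 & y0' & Hy0 & Hy0' & Hne0 & Hsum).
  destruct (normA_approx A (u y0) (m y0) e (Hm y0 (HPP0 y0 Hy0)) He) as (l3 & Hl3 & H3).
  destruct (normA_approx A (u y0') (m y0') e (Hm y0' (HPP0 y0' Hy0')) He) as (l4 & Hl4 & H4).
  destruct (Hsum l3 l4 Hl3 Hl4) as (l & Hl & Hineq).
  pose proof (HdP y0 y0' l Hy0 Hy0' Hne0 Hl).
  pose proof (Hlow y0 Hy0). pose proof (Hlow y0' Hy0').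
  pose proof (norm2_ge0 (vsub y0 y0') l).
  (* [norm2 (u y0) l3] and [norm2 (u y0') l4] exceed 0.94 d, but their squares sum to at most
     (1.03 d)^2. *)
  unfold e in *. nra.
Qed.

End Consequences.

Section T0Family.
Context {W I J : Type} (zero one : I) (c : W -> W -> I * J).

Lemma T0_family_nil : T0_family zero c nil.
Proof. split; [constructor|intros a b []]. Qed.

Lemma T0_family_NoDup l : T0_family zero c l -> NoDup l.
Proof. intros [H _]. exact H. Qed.

Lemma T0_family_filter p l : T0_family zero c l -> T0_family zero c (filter p l).
Proof.
  intros [Hnd Hh]. split; [apply NoDup_filter; auto|].
  intros a b Ha Hb. apply filter_In in Ha, Hb. apply Hh; tauto.
Qed.

Lemma T0_incompatible T1 T2 : zero <> one -> (forall a, In a T1 -> ~ In a T2) ->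
  (forall a b, In a T1 -> In b T2 -> fst (c a b) = one) -> incompatible (T0_family zero c) T1 T2.
Proof.
  intros H01 Hdis Hone l a b [_ Hh] Ha Hb Ha1 Hb2. apply H01.
  rewrite <- (Hone a b Ha1 Hb2). symmetry. apply Hh; auto. intros ->. exact (Hdis b Ha1 Hb2).
Qed.

Lemma T0_compatible T1 T2 : symmetric_coloring c -> (forall a, In a T1 -> ~ In a T2) ->
  (forall a b, In a T1 -> In b T2 -> fst (c a b) = zero) -> compatible (T0_family zero c) T1 T2.
Proof.
  intros Hsym Hdis Hzero l1 l2 [N1 K1] [N2 K2] I1 I2. split.
  - apply NoDup_app; auto. intros a Ha Ha'. exact (Hdis a (I1 a Ha) (I2 a Ha')).
  - intros a b Ha Hb Hab. apply in_app_or in Ha, Hb.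
    destruct Ha as [Ha|Ha]; destruct Hb as [Hb|Hb];
      [apply K1|apply Hzero|rewrite Hsym; apply Hzero|apply K2]; auto.
Qed.

Variable lt : W -> W -> Prop.
Hypothesis Hirr : forall a, ~ lt a a.
Hypothesis Hc : strong_T_coloring lt zero one c.

Lemma strong_T_incompatible_pairs : zero <> one ->
  pair_in_disjoint_families (incompatible (T0_family zero c)).
Proof.
  intros H01 T Hne Hdis.
  destruct (proj2 Hc T Hne) as [_ (xi & eta & Hlt & Hone)]; [intros xi eta; apply Hdis; auto|].
  assert (xi <> eta) by (intros ->; exact (Hirr _ Hlt)).
  exists xi, eta. split; auto. apply T0_incompatible; auto. apply Hdis; auto.
Qed.

Lemma strong_T_compatible_pairs : symmetric_coloring c ->
  pair_in_disjoint_families (compatible (T0_family zero c)).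
Proof.
  intros Hsym T Hne Hdis.
  destruct (proj2 Hc T Hne) as [(xi & eta & Hlt & Hzero) _]; [intros xi eta; apply Hdis; auto|].
  assert (xi <> eta) by (intros ->; exact (Hirr _ Hlt)).
  exists xi, eta. split; auto. apply T0_compatible; auto. apply Hdis; auto.
Qed.

End T0Family.

Theorem proposition4p3
  (W : Type) (lt : W -> W -> Prop) (Hw1 : is_omega1 W lt)
  (I J : Type) (zero one : I) (H01 : zero <> one) (HJ : inhabited J)
  (c : W -> W -> I * J) (Hsym : symmetric_coloring c)
  (Hc : strong_T_coloring lt zero one c)
  (eps : R) (Heps : 0 < eps) :
  (~ exists Y : (W -> R) -> Prop,
       uncountable Y /\ (forall y, Y y -> XA (T0_family zero c) y) /\
       equilateral (T0_family zero c) Y) /\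
  (~ exists Y : (W -> R) -> Prop,
       uncountable Y /\
       (forall y, Y y -> XA (T0_family zero c) y /\
                         normA (T0_family zero c) y = Finite 1) /\
       separated (T0_family zero c) (1 + eps) Y).
Proof.
  assert (Hirr : forall a, ~ lt a a) by apply Hw1.
  pose proof (T0_family_NoDup zero c) as HA_nodup.
  pose proof (T0_family_filter zero c) as HA_filter.
  pose proof (strong_T_incompatible_pairs zero one c lt Hirr Hc H01) as Hincompatible.
  split.
  - exact (no_uncountable_equilateral lt _ Hw1 (T0_family_nil zero c) HA_nodup HA_filter
             Hincompatible (strong_T_compatible_pairs zero one c lt Hirr Hc Hsym)).
  - exact (no_uncountable_separated_sphere lt _ Hw1 HA_nodup HA_filter Hincompatible eps Heps).
Qed.
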